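(* Let $0\le a<b$, $1<\alpha\le 2$, and let $q:[a,b]\to\mathbb{R}$ be continuous. Suppose the fractional boundary value problem $${}^{CF}D_a^{\alpha}u(t)+q(t)u(t)=0,\quad a<t<b,\qquad u(a)=u(b)=0,$$ has a nontrivial solution. Then $$\int_a^b|q(t)|\,dt\ \ge\ \begin{cases}\dfrac{1}{2-\alpha}, & \text{if } b-a<\dfrac{2-\alpha}{\alpha-1},\\[3mm] \dfrac{4(\alpha-1)(b-a)}{[(\alpha-1)(b-a)+(2-\alpha)]^2}, & \text{if } b-a\ge\dfrac{2-\alpha}{\alpha-1}.\end{cases}$$
   Context: ${}^{CF}D_a^{\alpha}$ denotes the Caputo–Fabrizio fractional derivative of order $\alpha\in(1,2]$ with lower terminal $a$: for a twice continuously differentiable $u$ on $[a,b]$ and $1<\alpha<2$, ${}^{CF}D_a^{\alpha}u(t)=\frac{1}{2-\alpha}\int_a^t \exp\!\big(-\frac{\alpha-1}{2-\alpha}(t-s)\big)u''(s)\,ds$, and for $\alpha=2$ it is $u''(t)$. A solution means a twice continuously differentiable function $u$ on $[a,b]$ satisfying the equation and boundary conditions; nontrivial means not identically zero. (The problem is equivalent to $u(t)=\int_a^b G(t,s)q(s)u(s)\,ds$ with $G(t,s)=\frac{b-t}{b-a}[(\alpha-1)(s-a)-2+\alpha]$ for $a\le s\le t\le b$ and $G(t,s)=\frac{t-a}{b-a}[(\alpha-1)(b-s)+2-\alpha]$ for $a\le t\le s\le b$.) *)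

From Stdlib Require Import Reals.
From Coquelicot Require Import Coquelicot.
Open Scope R_scope.

Definition Icc (a b t : R) : Prop := a <= t <= b.

Definition continuous_within_Icc (a b : R) (f : R -> R) (t : R) : Prop :=
  filterlim f (within (Icc a b) (locally t)) (locally (f t)).

Definition is_derive_Icc (a b : R) (f : R -> R) (t l : R) : Prop :=
  filterlim (fun h => (f (t + h) - f t) / h)
    (within (fun h => h <> 0 /\ Icc a b (t + h)) (locally 0)) (locally l).

Definition C2_on (a b : R) (u u1 u2 : R -> R) : Prop :=
  forall t, Icc a b t ->
    is_derive_Icc a b u t (u1 t) /\ is_derive_Icc a b u1 t (u2 t) /\
    continuous_within_Icc a b u2 t.

(* Caputo--Fabrizio derivative of order alpha in (1,2], expressed through
   the second derivative u2 of u. *)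
Definition CF_D (alpha a : R) (u2 : R -> R) (t : R) : R :=
  if Rlt_dec alpha 2 then
    / (2 - alpha) *
    RInt (fun s => exp (- ((alpha - 1) / (2 - alpha)) * (t - s)) * u2 s) a t
  else u2 t.

Definition lyap_bound (alpha a b : R) : R :=
  if Rlt_dec (b - a) ((2 - alpha) / (alpha - 1)) then / (2 - alpha)
  else 4 * (alpha - 1) * (b - a) / ((alpha - 1) * (b - a) + (2 - alpha)) ^ 2.

(* Put k = (alpha - 1) / (2 - alpha).  For alpha < 2, W = (2 - alpha) CF_D u is the
   convolution of u'' with exp (- k t), so W' = - k W + u''; hence g = u' + (2 - alpha) q u
   = u' - W satisfies g' = - (alpha - 1) q u (for alpha = 2 this is the equation itself).
   The first-order system u' = g - (2 - alpha) q u, g' = - (alpha - 1) q u with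
   u(a) = u(b) = 0 gives the Green representation u(t) = int_a^b G(t,s) q(s) u(s) ds, and
   |G| <= B, where B is the maximum over [0, L] (L = b - a) of the parabola
   y (( alpha - 1) (L - y) + 2 - alpha) / L.  At a maximum point of |u| this yields
   1 <= B int_a^b |q|, and 1 / B is the stated bound. *)

From Stdlib Require Import Reals Lra.
From Coquelicot Require Import Coquelicot.
Open Scope R_scope.

Lemma ball_R_Rabs (x e y : R) : ball x e y <-> Rabs (y - x) < e.
Proof. reflexivity. Qed.

Lemma locally_interior (a b t : R) : a < t < b -> locally t (fun x => a < x < b).
Proof. intros Ht. exact (open_and _ _ (open_gt a) (open_lt b) t Ht). Qed.

Lemma Rle_of_is_derive_nonneg (f f' : R -> R) (x y : R) : x <= y ->
  (forall t, x <= t <= y -> continuous f t) ->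
  (forall t, x < t < y -> is_derive f t (f' t)) ->
  (forall t, x < t < y -> 0 <= f' t) -> f x <= f y.
Proof.
  intros Hxy Hc Hd Hpos. destruct (Req_dec x y) as [<- | Hne]; [lra |].
  pose (pr := fun c (Hc : x < c < y) =>
                exist (derivable_pt_abs f c) (f' c) (proj1 (is_derive_Reals _ _ _) (Hd c Hc))).
  destruct (MVT f id x y pr (fun c _ => derivable_pt_id c) ltac:(lra)
              (fun c Hc' => proj2 (continuity_pt_filterlim _ _) (Hc c Hc'))
              (fun c _ => derivable_continuous_pt _ _ (derivable_pt_id c))) as [c [P E]].
  rewrite derive_pt_id in E. simpl in E. unfold id in E.
  specialize (Hpos c P). nra.
Qed.

Lemma Rabs_sub_le_RInt (F F' h : R -> R) (x y : R) : x <= y ->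
  (forall t, continuous h t) ->
  (forall t, x <= t <= y -> continuous F t) ->
  (forall t, x < t < y -> is_derive F t (F' t)) ->
  (forall t, x < t < y -> Rabs (F' t) <= h t) ->
  Rabs (F y - F x) <= RInt h x y.
Proof.
  intros Hxy Hh HcF HdF Hbound.
  assert (HdH : forall t, is_derive (fun s => RInt h x s) t (h t)).
  { intros t. apply (is_derive_RInt h _ x); [| apply Hh].
    apply filter_forall. intros s. apply (RInt_correct h x s), ex_RInt_continuous. intros z _. apply Hh. }
  assert (HcH : forall t, continuous (fun s => RInt h x s) t).
  { intros t. apply (ex_derive_continuous (fun s => RInt h x s)). exists (h t). apply HdH. }
  assert (Hsub : RInt h x x - F x <= RInt h x y - F y).
  { apply (Rle_of_is_derive_nonneg (fun t => RInt h x t - F t) (fun t => h t - F' t)); [exact Hxy | | |].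
    - intros t Ht. exact (continuous_minus _ _ t (HcH t) (HcF t Ht)).
    - intros t Ht. exact (is_derive_minus _ _ t _ _ (HdH t) (HdF t Ht)).
    - intros t Ht. specialize (Hbound t Ht). apply Rabs_le_between in Hbound. lra. }
  assert (Hadd : RInt h x x + F x <= RInt h x y + F y).
  { apply (Rle_of_is_derive_nonneg (fun t => RInt h x t + F t) (fun t => h t + F' t)); [exact Hxy | | |].
    - intros t Ht. exact (continuous_plus _ _ t (HcH t) (HcF t Ht)).
    - intros t Ht. exact (is_derive_plus _ _ t _ _ (HdH t) (HdF t Ht)).
    - intros t Ht. specialize (Hbound t Ht). apply Rabs_le_between in Hbound. lra. }
  rewrite RInt_point in Hsub, Hadd. apply Rabs_le_between. change zero with 0 in Hsub, Hadd. lra.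
Qed.

Lemma is_derive_RInt_exp_kernel (k a : R) (h : R -> R) (t : R) :
  (forall x, continuous h x) ->
  is_derive (fun x => RInt (fun s => exp (- k * (x - s)) * h s) a x) t
    (- k * RInt (fun s => exp (- k * (t - s)) * h s) a t + h t).
Proof.
  intros Hh.
  assert (Hc : forall x, continuous (fun s => exp (k * s) * h s) x).
  { intros x. apply (continuous_mult (fun s => exp (k * s)) h x); [| apply Hh].
    apply (ex_derive_continuous (fun s => exp (k * s))). auto_derive. exact I. }
  assert (Hfactor : forall x, RInt (fun s => exp (- k * (x - s)) * h s) a x
                          = exp (- k * x) * RInt (fun s => exp (k * s) * h s) a x).
  { intros x. rewrite <- (RInt_scal (V := R_CompleteNormedModule)).
    - apply RInt_ext. intros s _. change (scal ?u ?v) with (u * v).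
      rewrite <- Rmult_assoc, <- exp_plus. f_equal. f_equal. ring.
    - apply ex_RInt_continuous. intros z _. apply Hc. }
  apply (is_derive_ext (fun x => exp (- k * x) * RInt (fun s => exp (k * s) * h s) a x)).
  { intros x. symmetry. apply Hfactor. }
  rewrite Hfactor. auto_derive.
  - split; [apply (ex_RInt_continuous (V := R_CompleteNormedModule)); intros z _; apply Hc |].
    split; [| exact I]. apply filter_forall. intros x. apply continuity_pt_filterlim, Hc.
  - assert (E : exp (- k * t) * exp (k * t) = 1).
    { rewrite <- exp_plus, <- exp_0. f_equal. ring. }
    transitivity (- k * (exp (- k * t) * RInt (fun s => exp (k * s) * h s) a t)
                  + exp (- k * t) * exp (k * t) * h t); [ring |].
    rewrite E. ring.
Qed.

Definition clamp (a b x : R) : R := Rmax a (Rmin b x).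

(* Extending by constants outside [a, b] turns one-sided regularity on [a, b] into
   continuity on R, as needed by the mean value theorem. *)
Definition extend (a b : R) (f : R -> R) (x : R) : R := f (clamp a b x).

Lemma clamp_id (a b x : R) : a <= x <= b -> clamp a b x = x.
Proof. intros. unfold clamp, Rmax, Rmin. repeat destruct Rle_dec; lra. Qed.

Lemma clamp_Icc (a b x : R) : a <= b -> Icc a b (clamp a b x).
Proof. intros. unfold Icc, clamp, Rmax, Rmin. repeat destruct Rle_dec; lra. Qed.

Lemma Rabs_clamp_sub_le (a b x y : R) :
  Rabs (clamp a b x - clamp a b y) <= Rabs (x - y).
Proof.
  unfold clamp, Rmax, Rmin. repeat destruct Rle_dec; unfold Rabs; repeat destruct Rcase_abs; lra.
Qed.

Lemma filterlim_clamp (a b x : R) : a <= b ->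
  filterlim (clamp a b) (locally x) (within (Icc a b) (locally (clamp a b x))).
Proof.
  intros Hab P [eps HP]. exists eps. intros y Hy.
  apply HP; [| apply clamp_Icc; exact Hab].
  eapply Rle_lt_trans; [apply Rabs_clamp_sub_le | exact Hy].
Qed.

Lemma continuous_extend (a b : R) (f : R -> R) : a <= b ->
  (forall t, Icc a b t -> continuous_within_Icc a b f t) ->
  forall x, continuous (extend a b f) x.
Proof.
  intros Hab Hf x.
  exact (filterlim_comp _ _ _ _ _ _ _ _ (filterlim_clamp a b x Hab)
           (Hf _ (clamp_Icc a b x Hab))).
Qed.

Lemma is_derive_Icc_interior (a b : R) (f : R -> R) (t l : R) : a < t < b ->
  is_derive_Icc a b f t l -> is_derive f t l.
Proof.
  intros Ht Hf. apply is_derive_Reals. intros eps Heps.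
  destruct (proj1 (filterlim_locally _ _) Hf (mkposreal eps Heps)) as [d Hd].
  assert (Hd' : 0 < Rmin d (Rmin (t - a) (b - t))).
  { apply Rmin_pos; [apply cond_pos | apply Rmin_pos; lra]. }
  exists (mkposreal _ Hd'). intros h Hh0 Hh. simpl in Hh.
  pose proof (Rmin_l d (Rmin (t - a) (b - t))). pose proof (Rmin_r d (Rmin (t - a) (b - t))).
  pose proof (Rmin_l (t - a) (b - t)). pose proof (Rmin_r (t - a) (b - t)).
  apply Rabs_lt_between in Hh.
  apply (Hd h); [apply ball_R_Rabs; rewrite Rminus_0_r; apply Rabs_lt_between |]; unfold Icc; lra.
Qed.

Lemma is_derive_Icc_continuous (a b : R) (f : R -> R) (t l : R) :
  is_derive_Icc a b f t l -> continuous_within_Icc a b f t.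
Proof.
  intros Hf. apply filterlim_locally. intros eps.
  destruct (proj1 (filterlim_locally _ _) Hf (mkposreal 1 Rlt_0_1)) as [d Hd].
  assert (Hl : 0 < Rabs l + 1) by (pose proof (Rabs_pos l); lra).
  assert (Hd' : 0 < Rmin d (eps / (Rabs l + 1))).
  { apply Rmin_pos; [apply cond_pos | apply Rdiv_lt_0_compat; [apply cond_pos | lra]]. }
  exists (mkposreal _ Hd'). intros x Hx HIcc. apply (proj1 (ball_R_Rabs _ _ _)) in Hx. simpl in Hx.
  apply ball_R_Rabs.
  pose proof (Rmin_l d (eps / (Rabs l + 1))). pose proof (Rmin_r d (eps / (Rabs l + 1))).
  destruct (Req_dec x t) as [-> | Hxt].
  { rewrite Rminus_diag, Rabs_R0. apply cond_pos. }
  assert (Hq := Hd (x - t)). simpl in Hq.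
  rewrite Rplus_minus in Hq.
  assert (Hq1 : Rabs ((f x - f t) / (x - t) - l) < 1).
  { apply ball_R_Rabs, Hq; [apply ball_R_Rabs; rewrite Rminus_0_r; lra | split; [lra | exact HIcc]]. }
  assert (Hquot : Rabs ((f x - f t) / (x - t)) < Rabs l + 1).
  { pose proof (Rabs_triang ((f x - f t) / (x - t) - l) l) as Htr.
    replace ((f x - f t) / (x - t) - l + l) with ((f x - f t) / (x - t)) in Htr by ring. lra. }
  replace (f x - f t) with ((x - t) * ((f x - f t) / (x - t))) by (field; lra).
  rewrite Rabs_mult.
  apply Rle_lt_trans with (Rabs (x - t) * (Rabs l + 1)).
  { apply Rmult_le_compat_l; [apply Rabs_pos | lra]. }
  apply Rlt_le_trans with (eps / (Rabs l + 1) * (Rabs l + 1)).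
  { apply Rmult_lt_compat_r; lra. }
  right. field. lra.
Qed.

Lemma extend_id (a b : R) (f : R -> R) (x : R) : a <= x <= b -> extend a b f x = f x.
Proof. intros Hx. unfold extend. rewrite clamp_id by exact Hx. reflexivity. Qed.

Lemma is_derive_extend (a b : R) (f : R -> R) (t l : R) : a < t < b ->
  is_derive_Icc a b f t l -> is_derive (extend a b f) t l.
Proof.
  intros Ht Hf. apply (is_derive_ext_loc f); [| exact (is_derive_Icc_interior a b f t l Ht Hf)].
  apply (filter_imp (fun x => a < x < b)); [| exact (locally_interior a b t Ht)].
  intros x Hx. symmetry. apply extend_id. lra.
Qed.

Lemma C2_on_continuous_extend (a b : R) (u u1 u2 : R -> R) : a <= b -> C2_on a b u u1 u2 ->
  forall x, continuous (extend a b u) x /\ continuous (extend a b u1) x /\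
            continuous (extend a b u2) x.
Proof.
  intros Hab Hu x.
  split; [| split]; revert x; apply continuous_extend; try exact Hab; intros t Ht.
  - eapply is_derive_Icc_continuous, (Hu t Ht).
  - eapply is_derive_Icc_continuous, (Hu t Ht).
  - apply (Hu t Ht).
Qed.

Lemma C2_on_is_derive_extend (a b : R) (u u1 u2 : R -> R) (t : R) : a < t < b -> C2_on a b u u1 u2 ->
  is_derive (extend a b u) t (extend a b u1 t) /\ is_derive (extend a b u1) t (extend a b u2 t).
Proof.
  intros Ht Hu. assert (Htab : Icc a b t) by (unfold Icc; lra).
  rewrite !extend_id by lra.
  split; apply is_derive_extend; try exact Ht; apply (Hu t Htab).
Qed.

Lemma CF_D_ext (alpha a t : R) (f g : R -> R) : a <= t ->
  (forall s, a <= s <= t -> f s = g s) -> CF_D alpha a f t = CF_D alpha a g t.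
Proof.
  intros Hat Hfg. unfold CF_D. destruct Rlt_dec.
  - f_equal. apply RInt_ext. intros s Hs.
    rewrite Rmin_left, Rmax_right in Hs by lra. rewrite Hfg by lra. reflexivity.
  - apply Hfg. lra.
Qed.

Lemma is_derive_CF_first_integral (alpha a b : R) (q u u1 u2 : R -> R) :
  1 < alpha <= 2 ->
  (forall x, continuous u2 x) ->
  (forall t, a < t < b -> is_derive u1 t (u2 t)) ->
  (forall t, a < t < b -> CF_D alpha a u2 t + q t * u t = 0) ->
  forall t, a < t < b ->
  is_derive (fun x => u1 x + (2 - alpha) * (q x * u x)) t (- (alpha - 1) * (q t * u t)).
Proof.
  intros Hal Hc2 Hd1 Heq t Ht. unfold CF_D in Heq.
  destruct (Rlt_dec alpha 2) as [Hlt | Hge].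
  - set (k := (alpha - 1) / (2 - alpha)) in Heq.
    set (W := fun x => RInt (fun s => exp (- k * (x - s)) * u2 s) a x : R).
    assert (HW : forall s, a < s < b -> W s = - (2 - alpha) * (q s * u s)).
    { intros s Hs. specialize (Heq s Hs).
      replace (W s) with ((2 - alpha) * (/ (2 - alpha) * W s)) by (field; lra).
      replace (/ (2 - alpha) * W s) with (- (q s * u s)) by (unfold W; lra). ring. }
    apply (is_derive_ext_loc (fun x => u1 x - W x)).
    { apply (filter_imp (fun x => a < x < b)); [| exact (locally_interior a b t Ht)].
      intros x Hx. simpl. rewrite HW by exact Hx. ring. }
    replace (- (alpha - 1) * (q t * u t)) with (u2 t - (- k * W t + u2 t))
      by (rewrite HW by exact Ht; unfold k; field; lra).
    exact (is_derive_minus _ _ t _ _ (Hd1 t Ht) (is_derive_RInt_exp_kernel k a u2 t Hc2)).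
  - replace alpha with 2 in * by lra.
    apply (is_derive_ext u1); [intros x; rewrite Rminus_diag, Rmult_0_l, Rplus_0_r; reflexivity |].
    replace (- (2 - 1) * (q t * u t)) with (u2 t) by (specialize (Heq t Ht); lra).
    exact (Hd1 t Ht).
Qed.

(* The paper's G(t, s) for c = alpha - 1 and d = 2 - alpha. *)
Definition green (c d a b t s : R) : R :=
  if Rle_dec s t then (b - t) / (b - a) * (c * (s - a) - d)
  else (t - a) / (b - a) * (c * (b - s) + d).

Definition green_bound (c d L : R) : R :=
  if Rlt_dec L (d / c) then d else (c * L + d) ^ 2 / (4 * c * L).

Lemma parabola_le_green_bound (c d L y : R) : 0 < c -> 0 < L -> 0 <= y <= L ->
  y / L * (c * (L - y) + d) <= green_bound c d L.
Proof.
  intros Hc HL Hy.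
  replace (y / L * (c * (L - y) + d)) with (y * (c * (L - y) + d) / L) by (field; lra).
  apply Rle_div_l; [exact HL |].
  unfold green_bound. destruct Rlt_dec as [Hlt | _].
  - assert (c * L < d).
    { apply (Rmult_lt_compat_l c) in Hlt; [| exact Hc].
      replace (c * (d / c)) with d in Hlt by (field; lra). exact Hlt. }
    assert (c * y <= c * L) by (apply Rmult_le_compat_l; lra).
    assert (0 <= (L - y) * (d - c * y)) by (apply Rmult_le_pos; lra).
    nra.
  - assert (E : (c * L + d) ^ 2 / (4 * c * L) * L - y * (c * (L - y) + d)
                = (c * L + d - 2 * c * y) ^ 2 / (4 * c)) by (field; lra).
    assert (0 <= (c * L + d - 2 * c * y) ^ 2 / (4 * c))
      by (apply Rdiv_le_0_compat; [apply pow2_ge_0 | lra]).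
    lra.
Qed.

Lemma green_bound_pos (c d L : R) : 0 < c -> 0 <= d -> 0 < L -> 0 < green_bound c d L.
Proof.
  intros Hc Hd HL.
  assert (H := parabola_le_green_bound c d L (L / 2) Hc HL ltac:(lra)).
  replace (L / 2 / L) with (/ 2) in H by (field; lra).
  nra.
Qed.

Lemma Rabs_green_le (c d a b t s : R) : 0 < c -> 0 <= d -> a < b ->
  a <= t <= b -> a <= s <= b -> Rabs (green c d a b t s) <= green_bound c d (b - a).
Proof.
  intros Hc Hd Hab Ht Hs.
  unfold green. destruct Rle_dec as [Hst | Hst].
  - assert (Hp := parabola_le_green_bound c d (b - a) (b - t) Hc ltac:(lra) ltac:(lra)).
    replace (b - a - (b - t)) with (t - a) in Hp by ring.
    eapply Rle_trans; [| exact Hp].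
    rewrite Rabs_mult, (Rabs_pos_eq ((b - t) / (b - a))) by (apply Rdiv_le_0_compat; lra).
    apply Rmult_le_compat_l; [apply Rdiv_le_0_compat; lra |].
    apply Rabs_le_between. nra.
  - assert (Hp := parabola_le_green_bound c d (b - a) (t - a) Hc ltac:(lra) ltac:(lra)).
    replace (b - a - (t - a)) with (b - t) in Hp by ring.
    eapply Rle_trans; [| exact Hp].
    rewrite Rabs_pos_eq by (apply Rmult_le_pos; [apply Rdiv_le_0_compat | ]; nra).
    apply Rmult_le_compat_l; [apply Rdiv_le_0_compat |]; nra.
Qed.

Definition green_primitive (u g : R -> R) (p x : R) : R := (x - p) * g x - u x.

Section FirstOrderSystem.

Variables (a b c d : R) (q u g : R -> R).
Hypotheses (Hab : a < b) (Hc : 0 < c) (Hd : 0 <= d).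
Hypotheses (Hq : forall x, continuous q x) (Hu : forall x, continuous u x)
  (Hg : forall x, continuous g x).
Hypotheses (Hu' : forall t, a < t < b -> is_derive u t (g t - d * (q t * u t)))
  (Hg' : forall t, a < t < b -> is_derive g t (- c * (q t * u t))).
Hypotheses (Hua : u a = 0) (Hub : u b = 0).

Lemma is_derive_green_primitive (p t : R) : a < t < b ->
  is_derive (green_primitive u g p) t ((d - c * (t - p)) * (q t * u t)).
Proof.
  intros Ht. unfold green_primitive. auto_derive.
  - split; [eexists; exact (Hg' t Ht) | split; [eexists; exact (Hu' t Ht) | exact I]].
  - rewrite (is_derive_unique (fun x : R => g x) t _ (Hg' t Ht)),
      (is_derive_unique (fun x : R => u x) t _ (Hu' t Ht)).
    ring.
Qed.

Lemma continuous_green_primitive (p x : R) : continuous (green_primitive u g p) x.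
Proof.
  exact (continuous_minus _ _ x
           (continuous_mult _ _ x (continuous_minus _ _ x (continuous_id x) (continuous_const p x)) (Hg x))
           (Hu x)).
Qed.

Section Bounded.

Variable M : R.
Hypothesis HM : forall s, a <= s <= b -> Rabs (u s) <= M.

Lemma Rabs_green_primitive_sub_le (w p t0 x y : R) : a <= x <= y -> y <= b -> a <= t0 <= b ->
  (forall t, x < t < y -> w * (d - c * (t - p)) = - green c d a b t0 t) ->
  Rabs (w * green_primitive u g p y - w * green_primitive u g p x)
    <= RInt (fun s => green_bound c d (b - a) * M * Rabs (q s)) x y.
Proof.
  intros Hxy Hyb Ht0 Hw.
  apply (Rabs_sub_le_RInt (fun z => w * green_primitive u g p z)
           (fun t => w * ((d - c * (t - p)) * (q t * u t)))); [lra | | | |].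
  - intros s. exact (continuous_mult _ _ s (continuous_const _ s) (continuous_Rabs_comp _ s (Hq s))).
  - intros t _. exact (continuous_mult _ _ t (continuous_const w t) (continuous_green_primitive p t)).
  - intros t Ht. exact (is_derive_scal _ t w _ (is_derive_green_primitive p t ltac:(lra))).
  - intros t Ht. rewrite <- Rmult_assoc, Hw by exact Ht.
    rewrite Rabs_mult, Rabs_Ropp, Rabs_mult.
    replace (green_bound c d (b - a) * M * Rabs (q t))
      with (green_bound c d (b - a) * (Rabs (q t) * M)) by ring.
    apply Rmult_le_compat; [apply Rabs_pos | apply Rmult_le_pos; apply Rabs_pos | |].
    + apply Rabs_green_le; lra.
    + apply Rmult_le_compat_l; [apply Rabs_pos | apply HM; lra].
Qed.

Lemma Rabs_le_green_bound_RInt (t0 : R) : a < t0 < b ->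
  Rabs (u t0) <= green_bound c d (b - a) * M * RInt (fun s => Rabs (q s)) a b.
Proof.
  intros Ht0.
  set (h := fun s => green_bound c d (b - a) * M * Rabs (q s)).
  set (w1 := (b - t0) / (b - a)). set (w2 := - ((t0 - a) / (b - a))).
  assert (Hh : forall x y, ex_RInt h x y).
  { intros x y. apply (ex_RInt_continuous (V := R_CompleteNormedModule)). intros s _.
    exact (continuous_mult _ _ s (continuous_const _ s) (continuous_Rabs_comp _ s (Hq s))). }
  (* The Green representation of u t0: each increment integrates
     - G(t0, s) q(s) u(s) over one side of t0. *)
  assert (Hrepr : u t0 = - ((w1 * green_primitive u g a t0 - w1 * green_primitive u g a a)
                          + (w2 * green_primitive u g b b - w2 * green_primitive u g b t0))).
  { unfold w1, w2, green_primitive. rewrite Hua, Hub. field. lra. }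
  assert (Hleft := Rabs_green_primitive_sub_le w1 a t0 a t0 ltac:(lra) ltac:(lra) ltac:(lra)).
  assert (Hright := Rabs_green_primitive_sub_le w2 b t0 t0 b ltac:(lra) ltac:(lra) ltac:(lra)).
  assert (Hsplit : RInt h a t0 + RInt h t0 b = green_bound c d (b - a) * M * RInt (fun s => Rabs (q s)) a b).
  { transitivity (RInt h a b); [exact (RInt_Chasles h a t0 b (Hh _ _) (Hh _ _)) |].
    apply (RInt_scal (V := R_CompleteNormedModule)), (ex_RInt_continuous (V := R_CompleteNormedModule)).
    intros s _. exact (continuous_Rabs_comp _ s (Hq s)). }
  rewrite Hrepr, Rabs_Ropp, <- Hsplit.
  eapply Rle_trans; [apply Rabs_triang |].
  apply Rplus_le_compat.
  - apply Hleft. intros t Ht. unfold green. destruct Rle_dec; [| lra]. unfold w1. field. lra.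
  - apply Hright. intros t Ht. unfold green. destruct Rle_dec; [lra |]. unfold w2. field. lra.
Qed.

End Bounded.

Lemma lyapunov_system : (exists t, a <= t <= b /\ u t <> 0) ->
  / green_bound c d (b - a) <= RInt (fun t => Rabs (q t)) a b.
Proof.
  intros [t1 [Ht1 Hut1]].
  destruct (continuity_ab_maj (fun x => Rabs (u x)) a b ltac:(lra)
              (fun x _ => proj2 (continuity_pt_filterlim _ _) (continuous_Rabs_comp u x (Hu x))))
    as [t0 [Hmax Ht0]].
  assert (HM : 0 < Rabs (u t0)).
  { pose proof (Rabs_pos_lt _ Hut1). pose proof (Hmax t1 Ht1). lra. }
  assert (Ht0' : a < t0 < b).
  { destruct (Req_dec t0 a) as [-> | Hta]; [rewrite Hua, Rabs_R0 in HM; lra |].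
    destruct (Req_dec t0 b) as [-> | Htb]; [rewrite Hub, Rabs_R0 in HM; lra |]. lra. }
  assert (HB := green_bound_pos c d (b - a) Hc Hd ltac:(lra)).
  assert (Hest := Rabs_le_green_bound_RInt (Rabs (u t0)) Hmax t0 Ht0').
  apply (Rmult_le_reg_l (green_bound c d (b - a))); [exact HB |].
  rewrite Rinv_r by lra. nra.
Qed.

End FirstOrderSystem.

Lemma lyap_bound_eq (alpha a b : R) :
  lyap_bound alpha a b = / green_bound (alpha - 1) (2 - alpha) (b - a).
Proof. unfold lyap_bound, green_bound. destruct Rlt_dec; [reflexivity | now rewrite Rinv_div]. Qed.

Theorem theorem2 (a b alpha : R) (q : R -> R)
  (ha : 0 <= a) (hab : a < b) (hal1 : 1 < alpha) (hal2 : alpha <= 2)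
  (hq : forall t, Icc a b t -> continuous_within_Icc a b q t) :
  (exists u u1 u2 : R -> R,
      C2_on a b u u1 u2 /\
      (forall t, a < t < b -> CF_D alpha a u2 t + q t * u t = 0) /\
      u a = 0 /\ u b = 0 /\
      (exists t, Icc a b t /\ u t <> 0)) ->
  RInt (fun t => Rabs (q t)) a b >= lyap_bound alpha a b.
Proof.
  intros [u [u1 [u2 [Hu [Heq [Hua [Hub [t1 [Ht1 Hut1]]]]]]]]].
  assert (Cu := C2_on_continuous_extend a b u u1 u2 ltac:(lra) Hu).
  assert (Cq : forall x, continuous (extend a b q) x) by (apply continuous_extend; [lra | exact hq]).
  rewrite lyap_bound_eq, <- (RInt_ext (fun t => Rabs (extend a b q t))).
  2: { intros x Hx. rewrite Rmin_left, Rmax_right in Hx by lra. rewrite extend_id by lra. reflexivity. }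
  apply Rle_ge, (lyapunov_system a b (alpha - 1) (2 - alpha) _ (extend a b u)
                   (fun x => extend a b u1 x + (2 - alpha) * (extend a b q x * extend a b u x))).
  1-3: lra.
  - exact Cq.
  - intros x. apply Cu.
  - intros x. exact (continuous_plus _ _ x (proj1 (proj2 (Cu x)))
      (continuous_mult _ _ x (continuous_const _ x) (continuous_mult _ _ x (Cq x) (proj1 (Cu x))))).
  - intros t Ht. rewrite Rplus_minus_r. apply (C2_on_is_derive_extend a b u u1 u2 t Ht Hu).
  - apply (is_derive_CF_first_integral alpha a b _ _ _ (extend a b u2)); [lra | apply Cu | |].
    + intros t Ht. apply (C2_on_is_derive_extend a b u u1 u2 t Ht Hu).
    + intros t Ht. rewrite (CF_D_ext alpha a t _ u2), !extend_id by (lra || intros s Hs; apply extend_id; lra).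
      exact (Heq t Ht).
  - rewrite extend_id by lra. exact Hua.
  - rewrite extend_id by lra. exact Hub.
  - exists t1. rewrite extend_id by exact Ht1. split; [exact Ht1 | exact Hut1].
Qed.
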